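(* There exists a deterministic Guesser (using no randomness at all) with $\log^2 n + \log n$ bits of memory whose expected number of correct guesses, when playing the card guessing game against the random-shuffle Dealer, is at least $\frac12 \log n$.
   Context: Card guessing game: a deck consists of $n$ distinct cards labeled $1,\dots,n$ and the game lasts $n$ turns. In each turn the Dealer selects a card from the cards still in the deck and places it face down; the Guesser then names a card of $[n]$ (her guess); the card is revealed and discarded from the deck. A guess is correct if it equals the drawn card; the score is the number of correct guesses. A Guesser with $m$ bits of memory keeps a memory state in $\{0,1\}^m$ between turns and consists of a guessing function (mapping the memory state to a guess) and a state-transition function (mapping the memory state and the revealed card to a new memory state). The random-shuffle Dealer arranges the deck according to a uniformly random permutation and draws the cards in that order. Logarithms $\log$ are base 2. *)

From HB Require Import structures.
From mathcomp Require Import all_boot all_order all_fingroup all_algebra.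
From mathcomp Require Import all_classical all_reals exp.
Set Implicit Arguments. Unset Strict Implicit. Unset Printing Implicit Defensive.
Import Order.TTheory GRing.Theory Num.Theory.
Local Open Scope ring_scope.

Definition log2 {R : realType} (x : R) : R := ln x / ln 2.

Definition mstate (m : nat) := {ffun 'I_m -> bool}.

(* A deterministic Guesser with m bits of memory for the n-card game:
   an initial memory state, a guessing function and a state-transition
   function. Cards 1..n are represented by 'I_n. *)
Record guesser (n m : nat) := Guesser {
  g_init  : mstate m;
  g_guess : mstate m -> 'I_n;
  g_trans : mstate m -> 'I_n -> mstate m
}.

Fixpoint play_score (n m : nat) (G : guesser n m) (s : mstate m)
    (cards : seq 'I_n) : nat :=
  match cards with
  | [::] => 0%N
  | c :: cs => ((g_guess G s == c) + play_score G (g_trans G s c) cs)%N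
  end.

Definition score (n m : nat) (G : guesser n m) (sigma : {perm 'I_n}) : nat :=
  play_score G (g_init G) [seq sigma i | i <- enum 'I_n].

Definition expected_score {R : realType} (n m : nat) (G : guesser n m) : R :=
  (\sum_(sigma : {perm 'I_n}) (score G sigma)%:R) / (#|{perm 'I_n}|)%:R.

(* For each level i < L = trunc_log 2 n the Guesser keeps, modulo 2^(i+1), the
   number and the sum of the cards seen so far in the block [0, 2^(i+1)): 2(i+1)
   bits per level, L(L+1) bits in all.  When the count at some level is
   2^(i+1) - 1, exactly one card of that block is still in the deck and the sum
   identifies it, so the Guesser names it.  As the blocks are nested, this guess
   is right whenever the drawn card c is the last card of its own block
   [0, 2^(level c)) to appear, which under a uniform shuffle has probability at
   least 2^-(level c).  Summing over c < 2^L gives an expected score of at least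
   (L + 1)/2 >= (log n)/2. *)

From mathcomp Require Import all_boot all_order all_fingroup all_algebra.
From mathcomp Require Import reals exp.
From mathcomp Require Import zify ring lra.
Set Implicit Arguments. Unset Strict Implicit. Unset Printing Implicit Defensive.
Import Order.TTheory GRing.Theory Num.Theory.

Section CardEncoding.
Variables (A B : finType) (eqAB : #|A| = #|B|).

Definition card_enc (a : A) : B := enum_val (cast_ord eqAB (enum_rank a)).
Definition card_dec (b : B) : A := enum_val (cast_ord (esym eqAB) (enum_rank b)).

Lemma card_encK : cancel card_enc card_dec.
Proof. by move=> a; rewrite /card_dec /card_enc enum_valK cast_ordK enum_rankK. Qed.

End CardEncoding.

Fixpoint machine_score (C : eqType) (T : Type) (guess : T -> C) (trans : T -> C -> T)
    (s : T) (cs : seq C) : nat :=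
  if cs is c :: cs' then ((guess s == c) + machine_score guess trans (trans s c) cs')%N
  else 0%N.

Section SetTracking.
Variables (C : finType) (T : Type) (guess : T -> C) (trans : T -> C -> T).
Variable track : {set C} -> T.
Hypothesis trans_track :
  forall (X : {set C}) c, c \notin X -> trans (track X) c = track (c |: X).

Lemma machine_score_track (X : {set C}) cs : uniq cs -> {in cs, forall c, c \notin X} ->
  machine_score guess trans (track X) cs =
  (\sum_(c <- cs) (guess (track (X :|: [set x in take (index c cs) cs])) == c))%N.
Proof.
elim: cs X => [|c cs IH] X; first by rewrite big_nil.
move=> /= /andP[ccs ucs] csX; rewrite big_cons /= eqxx take0 setU0.
rewrite trans_track ?csX ?mem_head // IH //; last first.
  move=> x xcs; rewrite in_setU1 negb_or csX ?inE ?xcs ?orbT // andbT.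
  by apply: contraNneq ccs => <-.
congr addn; apply: eq_big_seq => x xcs.
have -> : (c == x) = false by apply: contraNF ccs => /eqP ->.
by rewrite /= set_cons setUCA setUA.
Qed.

End SetTracking.

Section Deck.
Variable n : nat.
Implicit Types (s : {perm 'I_n}) (c d : 'I_n) (S : {set 'I_n}).

Definition deck s : seq 'I_n := [seq s i | i <- enum 'I_n].

Definition drawn_before s c : {set 'I_n} := [set d | (s^-1)%g d < (s^-1)%g c].

Lemma drawn_before_deck s c :
  [set x in take (index c (deck s)) (deck s)] = drawn_before s c.
Proof.
apply/setP => x; rewrite !inE -{1}(permKV s c) index_map ?index_enum_ord //;
  last exact: perm_inj.
rewrite -map_take -{1}(permKV s x) mem_map; last exact: perm_inj.
rewrite -(mem_map val_inj) map_take val_enum_ord take_iota mem_iota /= add0n.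
by rewrite leq_min ltn_ord andbT.
Qed.

Lemma machine_score_deck (T : Type) (guess : T -> 'I_n) (trans : T -> 'I_n -> T)
    (track : {set 'I_n} -> T) :
    (forall (X : {set 'I_n}) c, c \notin X -> trans (track X) c = track (c |: X)) ->
  forall s, machine_score guess trans (track set0) (deck s) =
    (\sum_c (guess (track (drawn_before s c)) == c))%N.
Proof.
move=> trans_track s; rewrite machine_score_track //; last first.
- by move=> c _; rewrite inE.
- by rewrite map_inj_uniq ?enum_uniq //; exact: perm_inj.
rewrite big_map big_enum /= (reindex_inj (@perm_inj _ s^-1)) /=.
by apply: eq_bigr => c _; rewrite permKV set0U drawn_before_deck.
Qed.

Definition drawn_last S s c : bool := [forall d in S, (s^-1)%g d <= (s^-1)%g c].

Lemma drawn_lastE S s c : drawn_last S s c = (S :\ c \subset drawn_before s c).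
Proof.
apply/forall_inP/subsetP => [last_c d | sub d dS].
  rewrite !inE ltn_neqAle => /andP[dc /last_c ->].
  by rewrite (inj_eq val_inj) (inj_eq perm_inj) dc.
case: (eqVneq d c) => [-> // | dc].
by have := sub d; rewrite !inE dc dS => /(_ isT) /ltnW.
Qed.

Lemma drawn_last_tperm S a b s : a \in S -> b \in S ->
  drawn_last S (s * tperm a b) a = drawn_last S s b.
Proof.
move=> aS bS.
have tS d : (tperm a b d \in S) = (d \in S) by case: tpermP => [->|->|] //; rewrite ?aS ?bS.
have invM d : ((s * tperm a b)^-1)%g d = (s^-1)%g (tperm a b d).
  by rewrite invgM tpermV permM.
rewrite /drawn_last invM tpermL.
apply/forall_inP/forall_inP => last_c d dS.
  by move: (last_c (tperm a b d)); rewrite tS invM tpermK => /(_ dS).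
by rewrite invM; apply: last_c; rewrite tS.
Qed.

Lemma sum_drawn_last_eq S a b : a \in S -> b \in S ->
  (\sum_s drawn_last S s a = \sum_s drawn_last S s b)%N.
Proof.
move=> aS bS; rewrite (reindex_inj (mulIg (tperm a b))) /=.
by apply: eq_bigr => s _; rewrite drawn_last_tperm.
Qed.

Lemma sum_in_drawn_last S s a : a \in S -> (\sum_(c in S) drawn_last S s c = 1)%N.
Proof.
move=> aS; have [k kS kmax] := arg_maxnP (fun c => val ((s^-1)%g c)) aS.
have last_k : drawn_last S s k by apply/forall_inP.
rewrite (bigD1 k) //= last_k big1 // => c /andP[cS ck].
case: (boolP (drawn_last S s c)) => // /forall_inP /(_ k kS) le_kc.
have /val_inj/perm_inj eq_ck : val ((s^-1)%g c) = val ((s^-1)%g k).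
  by apply/eqP; rewrite eqn_leq le_kc andbT; exact: kmax.
by rewrite eq_ck eqxx in ck.
Qed.

Lemma card_drawn_last S a : a \in S ->
  (#|S| * \sum_s drawn_last S s a)%N = #|{perm 'I_n}|.
Proof.
move=> aS; rewrite -sum_nat_const.
rewrite (eq_bigr (fun c => \sum_s drawn_last S s c)); last first.
  by move=> c cS; rewrite (sum_drawn_last_eq aS cS).
rewrite exchange_big /= -sum1_card.
by apply: eq_bigr => s _; rewrite (sum_in_drawn_last s aS).
Qed.

Lemma prob_drawn_last (R : numFieldType) S a : a \in S ->
  ((\sum_s drawn_last S s a)%N%:R / #|{perm 'I_n}|%:R = #|S|%:R^-1 :> R)%R.
Proof.
move=> aS; rewrite -(card_drawn_last aS) natrM.
have /andP[S_neq0 k_neq0] : (#|S| != 0) && (\sum_s drawn_last S s a != 0).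
  rewrite -negb_or -muln_eq0 card_drawn_last // -lt0n.
  by apply/card_gt0P; exists 1%g.
by rewrite invfM mulrCA divff ?mulr1 // pnatr_eq0.
Qed.

End Deck.

Section EncodedGuesser.
Variables (n m : nat) (T : finType) (eqT : #|T| = #|mstate m|).
Variables (init : T) (guess : T -> 'I_n) (trans : T -> 'I_n -> T).

Definition encode_guesser : guesser n m :=
  Guesser (card_enc eqT init) (guess \o card_dec eqT)
          (fun s c => card_enc eqT (trans (card_dec eqT s) c)).

Lemma play_score_encode s cs :
  play_score encode_guesser (card_enc eqT s) cs = machine_score guess trans s cs.
Proof. by elim: cs s => [|c cs IH] s //=; rewrite !card_encK IH. Qed.

Lemma score_encode sigma :
  score encode_guesser sigma = machine_score guess trans init (deck sigma).
Proof. exact: play_score_encode. Qed.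

End EncodedGuesser.

Section Blocks.
Variable n : nat.

Definition block (j : nat) : {set 'I_n} := [set c : 'I_n | c < 2 ^ j].

Definition level (c : nat) : nat := (trunc_log 2 c).+1.

Lemma card_block j : #|block j| = minn (2 ^ j) n.
Proof.
rewrite -sum1_card (eq_bigl (fun c : 'I_n => c < 2 ^ j)) => [|c]; last by rewrite inE.
case: (leqP (2 ^ j) n) => [le_jn | lt_nj].
  by rewrite (big_ord_narrow le_jn) sum1_card card_ord.
rewrite (eq_bigl xpredT) ?sum1_card ?card_ord // => c.
exact: leq_trans (ltn_ord c) (ltnW lt_nj).
Qed.

Lemma block_subset j k : j <= k -> block j \subset block k.
Proof.
by move=> le_jk; apply/subsetP => c; rewrite !inE => /leq_trans; apply; rewrite leq_exp2l.
Qed.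

Lemma mem_block_level (c : 'I_n) : c \in block (level c).
Proof. by rewrite inE trunc_log_ltn. Qed.

End Blocks.

Section LevelSketch.
Variables (n : nat) (n_gt0 : 0 < n).
Local Notation L := (trunc_log 2 n).
Implicit Types (X : {set 'I_n}) (c : 'I_n).

Definition sketch_state := {dffun forall i : 'I_L, 'I_(2 ^ i.+1) * 'I_(2 ^ i.+1)}.

Lemma card_sketch_state : #|sketch_state| = #|mstate (L * L.+1)|.
Proof.
have prod_exp2 k : \prod_(i < k) (2 ^ i.+1 * 2 ^ i.+1) = 2 ^ (k * k.+1).
  elim: k => [|k IHk]; first by rewrite big_ord0.
  by rewrite big_ord_recr /= IHk -!expnD; congr (2 ^ _); lia.
rewrite card_dep_ffun card_ffun card_bool card_ord -prod_exp2 foldrE big_map big_enum.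
by apply: eq_bigr => i _; rewrite card_prod card_ord.
Qed.

Definition mod_ord (i x : nat) : 'I_(2 ^ i.+1) := Ordinal (ltn_pmod x (expn_gt0 2 i.+1)).

Definition sketch X : sketch_state :=
  [ffun i : 'I_L => (mod_ord i #|X :&: block n i.+1|,
                     mod_ord i (\sum_(x in X :&: block n i.+1) x))].

Definition sketch_add (a : sketch_state) c : sketch_state :=
  [ffun i : 'I_L => if c < 2 ^ i.+1 then (mod_ord i (a i).1.+1, mod_ord i ((a i).2 + c))
                    else a i].

Lemma sketch_addU X c : c \notin X -> sketch_add (sketch X) c = sketch (c |: X).
Proof.
move=> cX; apply/ffunP => i; rewrite !ffunE /=; set B := block n i.+1.
case: ifP => c_lt; last first.
  have -> // : (c |: X) :&: B = X :&: B.
  by apply/setP => x; rewrite !inE; case: (eqVneq x c) => [->|//]; rewrite c_lt !andbF.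
have -> : (c |: X) :&: B = c |: (X :&: B).
  by apply/setP => x; rewrite !inE; case: (eqVneq x c) => [->|//]; rewrite c_lt.
have cXB : c \notin X :&: B by rewrite inE (negbTE cX).
rewrite cardsU1 cXB big_setU1 //=.
congr pair; apply: val_inj => /=.
- by rewrite -[(_ %% _).+1]add1n modnDmr.
- by rewrite modnDml addnC.
Qed.

Definition one_missing (a : sketch_state) (i : 'I_L) : bool := (a i).1 == (2 ^ i.+1).-1 :> nat.

(* Adding 2 ^ i.+1 keeps the truncated subtraction exact, as (a i).2 < 2 ^ i.+1. *)
Definition missing (a : sketch_state) (i : 'I_L) : nat :=
  (\sum_(x in block n i.+1) x + 2 ^ i.+1 - (a i).2) %% 2 ^ i.+1.

Lemma one_missingP X i : one_missing (sketch X) i ->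
  exists2 u : 'I_n, block n i.+1 :\: X = [set u] & missing (sketch X) i = u.
Proof.
rewrite /one_missing /missing !ffunE /=.
set M := 2 ^ i.+1; set B := block n i.+1.
have cardB : #|B| = M.
  rewrite card_block; apply/minn_idPl; apply: leq_trans (trunc_logP (isT : 1 < 2) n_gt0).
  by rewrite leq_exp2l.
have M_gt1 : 1 < M by rewrite /M expnS leq_pmulr ?expn_gt0.
move=> /eqP count_seen.
have /cards1P [u BXu] : #|B :\: X| == 1.
  have seen_le : #|X :&: B| <= M by rewrite -cardB subset_leq_card ?subsetIr.
  have seen : #|X :&: B| = M.-1.
    case: (ltngtP #|X :&: B| M) => [lt_M | gt_M | eq_M].
    - by rewrite -count_seen modn_small.
    - by rewrite ltnNge seen_le in gt_M.
    - by move: count_seen; rewrite eq_M modnn; lia.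
  by have := cardsID X B; rewrite setIC seen cardB; lia.
exists u => //.
have uM : u < M by have := set11 u; rewrite -BXu !inE => /andP[].
have -> : \sum_(x in B) x = \sum_(x in X :&: B) x + u.
  by rewrite (big_setID X) /= setIC BXu big_set1.
set t := \sum_(x in X :&: B) x.
have -> : t + u + M - t %% M = u + (t %/ M).+1 * M by rewrite {1}(divn_eq t M) mulSn; lia.
by rewrite addnC modnMDl modn_small.
Qed.

Definition first_card : 'I_n := Ordinal n_gt0.

Definition sketch_guess (a : sketch_state) : 'I_n :=
  if [pick i | one_missing a i] is Some i then insubd first_card (missing a i) else first_card.

Lemma sketch_guess_last X c : c \notin X -> c < 2 ^ L ->
  block n (level c) :\ c \subset X -> sketch_guess (sketch X) = c.
Proof.
move=> cX c_lt last_c; rewrite /sketch_guess.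
case: pickP => [i /one_missingP [u BXu ->] | none].
  suff : c \in block n i.+1 :\: X by rewrite BXu inE => /eqP <-; rewrite valKd.
  rewrite inE cX /= inE; apply: contraT; rewrite -leqNgt => le_c.
  have B_sub : block n i.+1 \subset X.
    apply: subset_trans last_c; apply/subsetP => x xB.
    rewrite in_setD1 (subsetP (block_subset n _) x xB) ?andbT; last first.
      exact/leqW/trunc_log_max.
    by apply: contraTneq xB => ->; rewrite inE -leqNgt.
  by have := set11 u; rewrite -BXu inE => /andP[/negP + /(subsetP B_sub)].
case: (posnP c) => [c_eq0 | c_gt0]; first exact: val_inj.
have lv_le : level c <= L.
  rewrite -(@ltn_exp2l 2) //.
  exact: leq_ltn_trans (trunc_logP (isT : 1 < 2) c_gt0) c_lt.
have seen : X :&: block n (level c) = block n (level c) :\ c.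
  apply/setP => x; rewrite !inE; case: (eqVneq x c) => [-> | xc] /=.
    by rewrite (negbTE cX).
  apply/andP/idP => [[] // | xB]; split => //.
  by apply: (subsetP last_c); rewrite !inE xc.
have := none (Ordinal lv_le); rewrite /one_missing ffunE /= seen.
have := cardsD1 c (block n (level c)); rewrite mem_block_level card_block.
rewrite (minn_idPl _); last exact: leq_trans (leq_pexp2l _ lv_le) (trunc_logP _ n_gt0).
by rewrite /level add1n => card_B; rewrite modn_small card_B //= eqxx.
Qed.

Definition level_guesser : guesser n (L * L.+1) :=
  encode_guesser card_sketch_state (sketch set0) sketch_guess sketch_add.

Lemma score_level_guesser s :
  \sum_(c : 'I_n | c < 2 ^ L) drawn_last (block n (level c)) s c <= score level_guesser s.
Proof.
rewrite score_encode (machine_score_deck _ sketch_addU).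
rewrite [leqRHS](bigID (fun c : 'I_n => c < 2 ^ L)) /=.
apply: leq_trans (leq_addr _ _); apply: leq_sum => c c_lt.
case: (boolP (drawn_last _ s c)) => // last_c.
by rewrite (@sketch_guess_last (drawn_before s c) c) ?eqxx // ?inE ?ltnn // -drawn_lastE.
Qed.

End LevelSketch.

Local Open Scope ring_scope.

Lemma sum_inv_exp2_level (R : numFieldType) (k : nat) :
  \sum_(0 <= c < 2 ^ k) ((2 ^ level c)%:R : R)^-1 = k.+1%:R / 2.
Proof.
elim: k => [|k IHk]; first by rewrite big_nat1 /level trunc_log0 div1r.
rewrite (@big_cat_nat _ _ _ (2 ^ k)) ?leq_exp2l //= IHk.
rewrite (eq_big_nat _ _ (F2 := fun=> ((2 ^ k.+1)%:R : R)^-1)) => [|c /andP[ge_c lt_c]];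
  last first.
  by rewrite /level (@trunc_log_eq 2 k c) // ge_c lt_c.
rewrite sumr_const_nat expnS mul2n -addnn addnK -mulr_natr natrD -[k.+2]addn1 natrD.
have exp2_neq0 : (2 ^ k)%:R != 0 :> R by rewrite pnatr_eq0 expn_eq0.
by field; rewrite -natrD pnatr_eq0 addn_eq0 expn_eq0.
Qed.

Lemma expected_score_level_guesser (R : realType) (n : nat) (n_gt0 : (0 < n)%N) :
  (trunc_log 2 n).+1%:R / 2 <= expected_score (R := R) (level_guesser n_gt0).
Proof.
set L := trunc_log 2 n; set N := #|{perm 'I_n}|.
rewrite /expected_score -sum_inv_exp2_level.
apply: (@le_trans _ _ (\sum_(c : 'I_n | (c < 2 ^ L)%N)
    (\sum_s drawn_last (block n (level c)) s c)%N%:R / N%:R)).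
  rewrite (big_nat_widen _ _ n) ?(trunc_logP _ n_gt0) // big_mkord.
  apply: ler_sum => c c_lt; rewrite prob_drawn_last ?mem_block_level //.
  rewrite lef_pV2 ?posrE ?ltr0n ?card_gt0 ?expn_gt0 //;
    last by apply/set0Pn; exists c; exact: mem_block_level.
  by rewrite ler_nat card_block geq_minl.
rewrite -mulr_suml ler_wpM2r ?invr_ge0 ?ler0n //.
rewrite (eq_bigr (fun c : 'I_n => \sum_s ((drawn_last (block n (level c)) s c)%:R : R)));
  last by move=> c _; rewrite natr_sum.
rewrite exchange_big /=; apply: ler_sum => s _.
by rewrite -natr_sum ler_nat score_level_guesser.
Qed.

Lemma trunc_log2_le_log2 (R : realType) (n : nat) : (0 < n)%N ->
  (trunc_log 2 n)%:R <= log2 (n%:R : R).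
Proof.
move=> n_gt0; have ln2_gt0 : 0 < ln (2 : R) by rewrite ln_gt0 ?ltr1n.
rewrite /log2 ler_pdivlMr // mulr_natl -lnXn // ler_ln ?posrE ?exprn_gt0 ?ltr0n //.
by rewrite -natrX ler_nat trunc_logP.
Qed.

Lemma log2_lt_trunc_log2 (R : realType) (n : nat) : (0 < n)%N ->
  log2 (n%:R : R) < (trunc_log 2 n).+1%:R.
Proof.
move=> n_gt0; have ln2_gt0 : 0 < ln (2 : R) by rewrite ln_gt0 ?ltr1n.
rewrite /log2 ltr_pdivrMr // mulr_natl -lnXn // ltr_ln ?posrE ?exprn_gt0 ?ltr0n //.
by rewrite -natrX ltr_nat trunc_log_ltn.
Qed.

Theorem mainTheorem1 (R : realType) (n : nat) (hn : (0 < n)%N) :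
  exists (m : nat) (G : guesser n m),
    (m%:R <= log2 (n%:R : R) ^+ 2 + log2 (n%:R : R)) /\
    (1 / 2) * log2 (n%:R : R) <= expected_score (R:=R) G.
Proof.
set L := trunc_log 2 n; exists (L * L.+1)%N, (level_guesser hn).
have L_le : L%:R <= log2 (n%:R : R) := trunc_log2_le_log2 R hn.
have L_gt : log2 (n%:R : R) < L%:R + 1 by rewrite natr1 log2_lt_trunc_log2.
have L_ge0 : 0 <= L%:R :> R by rewrite ler0n.
split; first by rewrite natrM -natr1; nra.
by apply: le_trans (expected_score_level_guesser R hn); rewrite -/L -[L.+1%:R]natr1; lra.
Qed.
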